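(* Let $I$ be a quasipolar general ring and $e=e^2\in I$. Then $eIe$ is a quasipolar general ring.
   Context: A general ring is an associative ring not necessarily having an identity; $eIe=\{eae\mid a\in I\}$. For a general ring $K$ and $p,q\in K$, $p*q=p+q-pq$; $Q(K)=\{q\in K\mid p*q=0=q*p\text{ for some }p\in K\}$; $\mathrm{comm}_K(a)=\{x\in K\mid xa=ax\}$, $\mathrm{comm}_K^2(a)=\{x\in K\mid xy=yx\text{ for all }y\in\mathrm{comm}_K(a)\}$; $QN(K)=\{q\in K\mid qx\in Q(K)\text{ for all }x\in\mathrm{comm}_K(q)\}$. An element $a\in K$ is quasipolar in $K$ if there is an idempotent $p\in\mathrm{comm}_K^2(a)$ with $a+p\in Q(K)$ and $a-ap\in QN(K)$; $K$ is a quasipolar general ring if every element of $K$ is quasipolar in $K$. *)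

(* A general ring (associative, not necessarily unital) is
   modelled as an additive group T : zmodType together with a multiplication
   mul : T -> T -> T that is associative and biadditive.  Subrings such as
   eIe are modelled as predicates S : T -> Prop; all notions below are
   relative to such a subset S (with the operations inherited from T). *)
From HB Require Import structures.
From mathcomp Require Import all_boot all_order all_algebra.
Set Implicit Arguments. Unset Strict Implicit. Unset Printing Implicit Defensive.
Import GRing.Theory.
Local Open Scope ring_scope.

Definition is_genring (T : zmodType) (mul : T -> T -> T) : Prop :=
  [/\ associative mul,
      forall x y z, mul x (y + z) = mul x y + mul x z
    & forall x y z, mul (x + y) z = mul x z + mul y z].

Section GenRing.
Variables (T : zmodType) (mul : T -> T -> T).

Definition circ (p q : T) : T := p + q - mul p q.

Definition Qset (S : T -> Prop) (q : T) : Prop :=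
  S q /\ exists p, S p /\ circ p q = 0 /\ circ q p = 0.

Definition commK (S : T -> Prop) (a x : T) : Prop := S x /\ mul x a = mul a x.

Definition comm2K (S : T -> Prop) (a x : T) : Prop :=
  S x /\ forall y, commK S a y -> mul x y = mul y x.

Definition QNset (S : T -> Prop) (q : T) : Prop :=
  S q /\ forall x, commK S q x -> Qset S (mul q x).

Definition quasipolar_in (S : T -> Prop) (a : T) : Prop :=
  exists p, [/\ comm2K S a p, mul p p = p, Qset S (a + p) & QNset S (a - mul a p)].

Definition quasipolar_genring (S : T -> Prop) : Prop :=
  forall a, S a -> quasipolar_in S a.

Definition corner (e : T) : T -> Prop := fun x => exists a, x = mul (mul e a) e.

End GenRing.

From mathcomp Require Import all_boot all_order all_algebra.
Import GRing.Theory.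
Local Open Scope ring_scope.
Set Implicit Arguments. Unset Strict Implicit.

(* Let e be an idempotent of the general ring I and a an element of the
   corner eIe with a quasipolar witness p in I.  Since e commutes with a,
   the idempotent p (which lies in the double commutant of a) commutes
   with e, and the proof shows that ep = pe = epe is a quasipolar witness
   for a inside eIe. *)

Section CornerRing.
Variables (T : zmodType) (mul : T -> T -> T).
Hypothesis mulA : associative mul.
Hypothesis mulDr : forall x y z, mul x (y + z) = mul x y + mul x z.
Hypothesis mulDl : forall x y z, mul (x + y) z = mul x z + mul y z.

Lemma mul0x x : mul 0 x = 0.
Proof. by apply: (addrI (mul 0 x)); rewrite -mulDl !addr0. Qed.

Lemma mulx0 x : mul x 0 = 0.
Proof. by apply: (addrI (mul x 0)); rewrite -mulDr !addr0. Qed.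

Lemma mulxN x y : mul x (- y) = - mul x y.
Proof. by apply/eqP; rewrite -addr_eq0 -mulDr addNr mulx0. Qed.

Lemma mulNx x y : mul (- x) y = - mul x y.
Proof. by apply/eqP; rewrite -addr_eq0 -mulDl addNr mul0x. Qed.

Lemma mulxB x y z : mul x (y - z) = mul x y - mul x z.
Proof. by rewrite mulDr mulxN. Qed.

Lemma mulBx x y z : mul (x - y) z = mul x z - mul y z.
Proof. by rewrite mulDl mulNx. Qed.

Variable e : T.
Hypothesis ee : mul e e = e.

Lemma corner_idl x : corner mul e x -> mul e x = x.
Proof. by case=> b ->; rewrite !mulA ee. Qed.

Lemma corner_idr x : corner mul e x -> mul x e = x.
Proof. by case=> b ->; rewrite -!mulA ee. Qed.

Lemma cornerP x : mul e x = x -> mul x e = x -> corner mul e x.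
Proof. by move=> ex xe; exists x; rewrite ex xe. Qed.

Lemma circ_compress p q : mul e q = mul q e ->
  circ mul (mul (mul e p) e) (mul q e) = mul (mul e (circ mul p q)) e /\
  circ mul (mul q e) (mul (mul e p) e) = mul (mul e (circ mul q p)) e.
Proof.
move=> eq; rewrite /circ !mulxB !mulBx !mulDr !mulDl.
have eqe : mul (mul e q) e = mul q e by rewrite eq -mulA ee.
have epqe : mul (mul (mul e p) e) (mul q e) = mul (mul e (mul p q)) e.
  by rewrite !mulA -(mulA _ e q) eq mulA -(mulA _ e e) ee.
have eqpe : mul (mul q e) (mul (mul e p) e) = mul (mul e (mul q p)) e.
  by rewrite !mulA -(mulA q e e) ee -eq.
by rewrite eqe epqe eqpe.
Qed.

Lemma Q_compress q : Qset mul (fun _ => True) q -> mul e q = mul q e ->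
  Qset mul (corner mul e) (mul q e).
Proof.
move=> [_ [p [_ [pq qp]]]] eq.
split; first by exists q; rewrite eq -mulA ee.
exists (mul (mul e p) e); split; first by exists p.
have [-> ->] := circ_compress p eq.
by rewrite pq qp mulx0 mul0x.
Qed.

(* An element of the corner that is quasinilpotent in I is quasinilpotent
   in the corner: its products with corner elements stay in the corner. *)
Lemma QN_corner z : corner mul e z -> QNset mul (fun _ => True) z ->
  QNset mul (corner mul e) z.
Proof.
move=> Cz [_ QNz]; split=> // x [Cx xz].
have -> : mul z x = mul (mul z x) e by rewrite -mulA corner_idr.
apply: Q_compress; first exact: QNz.
by rewrite mulA corner_idl // -mulA corner_idr.
Qed.

Variable a : T.
Hypothesis Ca : corner mul e a.

(* e commutes with a, so everything in the double commutant of a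
   commutes with e. *)
Lemma comm2_comm_e p : comm2K mul (fun _ => True) a p -> mul e p = mul p e.
Proof.
move=> [_ p_comm2]; symmetry; apply: p_comm2.
by rewrite /commK (corner_idl Ca) (corner_idr Ca).
Qed.

Lemma comm2_compress p : comm2K mul (fun _ => True) a p ->
  comm2K mul (corner mul e) a (mul e p).
Proof.
move=> p_comm2; have ep := comm2_comm_e p_comm2.
split; first by exists p; rewrite -mulA -ep mulA ee.
move=> y [Cy ya]; have py : mul p y = mul y p by apply: p_comm2.2.
by rewrite -mulA py mulA corner_idl // -{1}(corner_idr Cy) -mulA.
Qed.

Lemma quasipolar_in_corner :
  quasipolar_in mul (fun _ => True) a -> quasipolar_in mul (corner mul e) a.
Proof.
move=> [p [p_comm2 pp Qap QNap]].
have ep := comm2_comm_e p_comm2.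
exists (mul e p); split.
- exact: comm2_compress.
- by rewrite -mulA (mulA p e p) -ep -mulA pp mulA ee.
- have -> : a + mul e p = mul (a + p) e by rewrite mulDl (corner_idr Ca) ep.
  by apply: Q_compress; rewrite // mulDr mulDl (corner_idl Ca) (corner_idr Ca) ep.
- have -> : mul a (mul e p) = mul a p by rewrite mulA (corner_idr Ca).
  apply: QN_corner => //; apply: cornerP.
  + by rewrite mulxB mulA (corner_idl Ca).
  + by rewrite mulBx -mulA -ep mulA (corner_idr Ca).
Qed.

End CornerRing.

Theorem theorem3p5 (T : zmodType) (mul : T -> T -> T) :
  is_genring mul ->
  quasipolar_genring mul (fun _ => True) ->
  forall e : T, mul e e = e ->
  quasipolar_genring mul (corner mul e).
Proof.
move=> [mulA mulDr mulDl] qpI e ee a Ca.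
exact: (quasipolar_in_corner mulA mulDr mulDl ee Ca (qpI a I)).
Qed.
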